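(* Let $\mathfrak R\subseteq\mathfrak R(d_*,L_*,s_* )$ be a cubical iterated graph system with replacement graphs $G_m$, and let $n\in\mathbb N$. For every $\tilde w\in W_\#$ there is a folding of $G_{n+|\tilde w|}$ onto $\tilde w\cdot W_n:=\{\tilde wu: u\in W_n\}$.
   Context: Graphs: $(V,E)$ with $V$ finite non-empty, $E\subseteq V\times V$, $(x,y)\in E\Rightarrow(y,x)\notin E$; $\{x,y\}\in E$ means either orientation. A mapping between graphs $\varphi:G\to G'$ is a map on vertices such that each edge $\{x,y\}$ has $\varphi(x)=\varphi(y)$ or $\{\varphi(x),\varphi(y)\}\in E(G')$. For $U\subseteq V(G)$, $\langle U\rangle$ is the induced subgraph; a folding of $G$ onto $U$ is a mapping between graphs $\varphi:G\to\langle U\rangle$ with $\varphi|_U=\mathrm{id}_U$. An iterated graph system (IGS) $\mathfrak R$ consists of a connected graph $G_1=(S,E)$, a finite set $\mathcal T$ of types, a surjective typing $\mathfrak t:E\to\mathcal T$ and non-empty gluing rules $I_t\subseteq S\times S$ ($t\in\mathcal T$). With $W_m=S^m$, $W_\#=\bigcup_{m\ge1}W_m$ and $[w]_k=w_1\cdots w_k$, the replacement graphs $G_m=(W_m,E_m)$ and their typings are defined recursively: $(w,v)\in E_{m+1}$ iff either (1) $[w]_m=[v]_m$ and $(w_{m+1},v_{m+1})\in E$ (type $\mathfrak t(w_{m+1},v_{m+1})$), or (2) $([w]_m,[v]_m)\in E_m$ and $(w_{m+1},v_{m+1})\in I_{\mathfrak t([w]_m,[v]_m)}$ (type $\mathfrak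 t([w]_m,[v]_m)$). A mapping of IGS $\varphi:\mathfrak R\to\mathfrak R'$ is a graph mapping $G_1\to G_1'$ such that (i) if $\varphi(w_1)=\varphi(v_1)$ for an edge $\{w_1,v_1\}$ of type $t$ then $\varphi(w_2)=\varphi(v_2)$ for all $(w_2,v_2)\in I_t$; (ii) if $(w_1,v_1)\in E$ has type $t$ and $(\varphi(w_1),\varphi(v_1))\in E'$ has type $t'$ then $(\varphi(w_2),\varphi(v_2))\in I'_{t'}$ for all $(w_2,v_2)\in I_t$; (iii) if $(w_1,v_1)\in E$ has type $t$ and $(\varphi(v_1),\varphi(w_1))\in E'$ has type $t'$ then $(\varphi(v_2),\varphi(w_2))\in I'_{t'}$ for all $(w_2,v_2)\in I_t$. An isomorphism of IGS is a graph isomorphism such that it and its inverse are mappings of IGS. $\mathfrak R$ is a sub-system of $\mathfrak R'$ ($\mathfrak R\subseteq\mathfrak R'$) if $S\subseteq S'$, $\mathcal T=\mathcal T'$ and the inclusion $S\to S'$ is a mapping of IGS. Cubical IGS: for integers $d_*\ge1$, $s_*\ge1$, $L_*\ge3$, let $\mathfrak R(d_*,L_*,s_* )$ have symbols $S(d_*,L_*,s_* )=\{1,\dots,L_*\}^{d_*}\times\{\underline1,\dots,\underline{s_*}\}$, coordinate functions $c_i(w)$ ($i=1,\dots,d_*$) and sheet $s(w)$; types $\{t_1,\dots,t_{d_*}\}$; $(w,v)$ is an edge of type $t_j$ iff $c_i(v)=c_i(w)$ for $i\neq j$ and $c_j(v)=c_j(w)+1$; $(w,v)\in I_{t_j}$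 iff $c_i(w)=c_i(v)$ for $i\ne j$, $(c_j(w),c_j(v))=(L_*,1)$ and $s(w)=s(v)$. Define maps on $S(d_*,L_*,s_* )$, all preserving the sheet $s$ and all coordinates other than those listed: $\eta_j$: $c_j\mapsto L_*+1-c_j$; for $j\neq k$, $\alpha^+_{j,k}$ swaps $c_j$ and $c_k$; $\alpha^-_{j,k}$ sets $c_k(\alpha(w))=L_*+1-c_j(w)$ and $c_j(\alpha(w))=L_*+1-c_k(w)$. Let $\mathcal G(d_*,L_*,s_* )$ be the set of all these maps. A cubical IGS is a sub-system $\mathfrak R\subseteq\mathfrak R(d_*,L_*,s_* )$ such that: (C1) for each $j$, every $w\in S(d_*,L_*,s_* )$ with $c_i(w)\in\{1,L_*\}$ for all $i\neq j$ and $s(w)=\underline1$ (call this condition $(\ast_j)$) lies in $S(\mathfrak R)$; (C2) if $w,v$ satisfy $(\ast_j)$ for the same $j$, $c_i(v)=c_i(w)$ for $i\neq j$ and $c_j(v)=c_j(w)+1$, then $(w,v)\in E(\mathfrak R)$; (C3) if $w,v$ satisfy $(\ast_j)$ for the same $j$, $c_i(w)=c_i(v)$ for $i\neq j$ and $(c_j(w),c_j(v))=(L_*,1)$, then $(w,v)\in I_{t_j}(\mathfrak R)$; (C4) for every $\alpha\in\mathcal G(d_*,L_*,s_* )$ the restriction $\alpha|_{S(\mathfrak R)}$ is an isomorphism of IGS $\mathfrak R\to\mathfrak R$. *)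

From mathcomp Require Import all_boot.
Set Implicit Arguments. Unset Strict Implicit. Unset Printing Implicit Defensive.

(* Iterated graph systems.  An IGS is encoded inside an ambient finite type  *)
(* V: its symbol set S is the finite set [sym], its edge set E is [edge]     *)
(* (oriented pairs), its typing is [typ] (only meaningful on edges), and its *)
(* gluing rules are [glue t] (t : T, the finite type of types).              *)
Record IGS (V T : finType) := MkIGS {
  sym  : {set V};
  edge : rel V;
  typ  : V -> V -> T;
  glue : T -> rel V }.

Definition uedge (V T : finType) (R : IGS V T) : rel V :=
  fun x y => edge R x y || edge R y x.

Definition is_IGS (V T : finType) (R : IGS V T) : Prop :=
  [/\ (exists x, x \in sym R),
      (forall x y, edge R x y -> (x \in sym R) && (y \in sym R)),
      (forall x y, edge R x y -> ~~ edge R y x) &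
      (forall x y, x \in sym R -> y \in sym R -> connect (uedge R) x y)] /\
  [/\
      (forall t : T, exists x y, edge R x y /\ typ R x y = t),
      (forall t : T, exists x y, glue R t x y) &
      (forall t x y, glue R t x y -> (x \in sym R) && (y \in sym R))].

Definition igs_map (V T V' T' : finType) (R : IGS V T) (R' : IGS V' T')
    (phi : V -> V') : Prop :=
  [/\ (forall x, x \in sym R -> phi x \in sym R'),
      (forall x y, edge R x y ->
         phi x = phi y \/ uedge R' (phi x) (phi y)),
      (forall w1 v1, edge R w1 v1 -> phi w1 = phi v1 ->
         forall w2 v2, glue R (typ R w1 v1) w2 v2 -> phi w2 = phi v2),
      (forall w1 v1, edge R w1 v1 -> edge R' (phi w1) (phi v1) ->
         forall w2 v2, glue R (typ R w1 v1) w2 v2 ->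
           glue R' (typ R' (phi w1) (phi v1)) (phi w2) (phi v2)) &
      (forall w1 v1, edge R w1 v1 -> edge R' (phi v1) (phi w1) ->
         forall w2 v2, glue R (typ R w1 v1) w2 v2 ->
           glue R' (typ R' (phi v1) (phi w1)) (phi v2) (phi w2))].

Definition igs_iso (V T : finType) (R : IGS V T) (phi : V -> V) : Prop :=
  exists psi : V -> V,
    [/\ {in sym R, cancel phi psi}, {in sym R, cancel psi phi},
        igs_map R R phi & igs_map R R psi].

Definition subsystem (V T : finType) (R R' : IGS V T) : Prop :=
  {subset sym R <= sym R'} /\ igs_map R R' id.

Definition inW (V T : finType) (R : IGS V T) (m : nat) (w : seq V) : bool :=
  (size w == m) && all (mem (sym R)) w.

Definition inWsharp (V T : finType) (R : IGS V T) (w : seq V) : Prop :=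
  exists m, 0 < m /\ inW R m w.

(* Type of the edge (w,v) of the replacement graph, computed on the
   reversed words (last letter first); None if (w,v) is not an edge. *)
Fixpoint redgeT (V T : finType) (R : IGS V T) (rw rv : seq V) : option T :=
  match rw, rv with
  | a :: rw', b :: rv' =>
      if rw' == rv' then (if edge R a b then Some (typ R a b) else None)
      else match redgeT R rw' rv' with
           | Some t => if glue R t a b then Some t else None
           | None => None
           end
  | _, _ => None
  end.

Definition Gedge (V T : finType) (R : IGS V T) (m : nat) (w v : seq V) : bool :=
  [&& inW R m w, inW R m v & redgeT R (rev w) (rev v) != None].

Definition folding (V T : finType) (R : IGS V T) (m : nat)
    (U : seq V -> Prop) (phi : seq V -> seq V) : Prop :=
  [/\ (forall x, inW R m x -> U (phi x)),
      (forall x y, Gedge R m x y ->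
         phi x = phi y \/ Gedge R m (phi x) (phi y) \/ Gedge R m (phi y) (phi x)) &
      (forall u, U u -> phi u = u)].

Definition prefixed (V T : finType) (R : IGS V T) (wt : seq V) (n : nat)
    (x : seq V) : Prop :=
  exists u, inW R n u /\ x = wt ++ u.

(* Coordinates are 0-based: c_i(w) = val (w.1 i) + 1 ∈ {1..L};
   sheet s(w) = val w.2 + 1 ∈ {1..s}. *)
Definition cubeV (d L s : nat) : finType := ({ffun 'I_d -> 'I_L} * 'I_s)%type.

Section Cube.
Variables (d L s : nat).
Local Notation V := (cubeV d L s).

Definition cedge (j : 'I_d) (w v : V) : bool :=
  [forall i, (i != j) ==> (v.1 i == w.1 i)] && (val (v.1 j) == (val (w.1 j)).+1).

Definition cglue (j : 'I_d) (w v : V) : bool :=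
  [&& [forall i, (i != j) ==> (w.1 i == v.1 i)],
      val (w.1 j) == L.-1, val (v.1 j) == 0 & w.2 == v.2].

Definition ctyp (hd : 0 < d) (w v : V) : 'I_d :=
  odflt (Ordinal hd) [pick j | cedge j w v].

Definition cubeIGS (hd : 0 < d) : IGS V 'I_d :=
  @MkIGS V 'I_d setT (fun w v => [exists j, cedge j w v]) (ctyp hd) cglue.

Definition star (j : 'I_d) (w : V) : bool :=
  [forall i, (i != j) ==> ((val (w.1 i) == 0) || (val (w.1 i) == L.-1))]
  && (val w.2 == 0).

Definition eta_map (j : 'I_d) (w : V) : V :=
  ([ffun i => if i == j then rev_ord (w.1 i) else w.1 i], w.2).
Definition alpha_plus (j k : 'I_d) (w : V) : V :=
  ([ffun i => if i == j then w.1 k else if i == k then w.1 j else w.1 i], w.2).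
Definition alpha_minus (j k : 'I_d) (w : V) : V :=
  ([ffun i => if i == j then rev_ord (w.1 k)
              else if i == k then rev_ord (w.1 j) else w.1 i], w.2).

Definition cubical (hd : 0 < d) (R : IGS V 'I_d) : Prop :=
  [/\ is_IGS R, subsystem R (cubeIGS hd) &
      (forall j w, star j w -> w \in sym R)] /\
  [/\
      (forall j w v, star j w -> star j v -> cedge j w v -> edge R w v),
      (forall j w v, star j w -> star j v ->
         [forall i, (i != j) ==> (w.1 i == v.1 i)] ->
         val (w.1 j) == L.-1 -> val (v.1 j) == 0 -> glue R j w v) &
      ((forall j, igs_iso R (eta_map j)) /\
       (forall j k, j != k -> igs_iso R (alpha_plus j k) /\ igs_iso R (alpha_minus j k)))].
End Cube.

From mathcomp Require Import all_boot.
Set Implicit Arguments. Unset Strict Implicit. Unset Printing Implicit Defensive.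

(* Write w = x u with x the first letter.  Reflecting every coordinate in which
   x and a given letter a have different parity sends x.W_m onto a.W_m: inside
   the copy x.W_m it is a product of the symmetries eta_j, hence a graph map, and
   across an edge of type t_j between two copies x.W_m, y.W_m it identifies the
   glued letters p (with c_j(p) = L) and q (with c_j(q) = 1), because x and y
   differ in the parity of c_j exactly once and eta_j swaps L and 1.  Iterating
   over the letters of w~ gives the folding onto w~.W_n. *)

Lemma is_IGS_irrefl (V T : finType) (R : IGS V T) x : is_IGS R -> ~~ edge R x x.
Proof. by case=> [[_ _ asym _] _]; apply/negP => e; move: (asym x x e); rewrite e. Qed.

Section ReplacementGraphs.
Variables (V T : finType) (R : IGS V T).
Hypothesis edge_irrefl : forall x, ~~ edge R x x.

Definition Gadj m (x y : seq V) : Prop :=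
  x = y \/ Gedge R m x y \/ Gedge R m y x.

Lemma Gadj_sym m x y : Gadj m x y -> Gadj m y x.
Proof. by case=> [->|[e|e]]; [left | right; right | right; left]. Qed.

Lemma inW_cons m x u : inW R m.+1 (x :: u) = (x \in sym R) && inW R m u.
Proof. by rewrite /inW /= eqSS andbCA. Qed.

Lemma inW_map (psi : V -> V) m w :
  {homo psi : x / x \in sym R} -> inW R m w -> inW R m (map psi w).
Proof.
rewrite /inW size_map => psiS /andP[-> /allP wS] /=.
by apply/allP => _ /mapP[x xw ->]; apply: psiS (wS x xw).
Qed.

Lemma redgeT_refl r : redgeT R r r = None.
Proof. by case: r => [|c r] //=; rewrite eqxx (negbTE (edge_irrefl c)). Qed.

Lemma redgeT_rcons_eq r1 r2 a : size r1 = size r2 ->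
  redgeT R (rcons r1 a) (rcons r2 a) = redgeT R r1 r2.
Proof.
elim: r1 r2 => [|x r1 IH] [|y r2] //= => [_|[sz]]; first by rewrite (negbTE (edge_irrefl a)).
by rewrite eqseq_rcons eqxx andbT IH.
Qed.

Lemma redgeT_rcons_neq r1 r2 x y t : size r1 = size r2 -> x != y ->
  redgeT R (rcons r1 x) (rcons r2 y) = Some t ->
  [/\ edge R x y, t = typ R x y & all2 (glue R t) r1 r2].
Proof.
elim: r1 r2 t => [|p r1 IH] [|q r2] t //= => [_ _|[sz] xy].
  by case: ifP => // e [<-].
rewrite eqseq_rcons (negbTE xy) andbF.
case E: redgeT => [t'|] //; case: ifP => // g [<-].
by have [e tE gl] := IH _ _ sz xy E; rewrite /= g gl.
Qed.

Lemma Gedge_cons m a u v : a \in sym R ->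
  Gedge R m.+1 (a :: u) (a :: v) = Gedge R m u v.
Proof.
move=> aS; rewrite /Gedge !inW_cons aS /=.
case uW: (inW R m u) => //; case vW: (inW R m v) => //=.
rewrite !rev_cons redgeT_rcons_eq // !size_rev.
by move: uW vW => /andP[/eqP -> _] /andP[/eqP -> _].
Qed.

Lemma Gadj_cons m a u v : a \in sym R -> Gadj m u v -> Gadj m.+1 (a :: u) (a :: v).
Proof. by move=> aS; rewrite /Gadj !Gedge_cons // => -[->|]; [left | right]. Qed.

Definition replacement_map (psi : V -> V) : Prop :=
  {homo psi : x / x \in sym R} /\
  forall m w v, Gedge R m w v -> Gadj m (map psi w) (map psi v).

Lemma replacement_map_id : replacement_map id.
Proof. by split=> // m w v e; rewrite !map_id; right; left. Qed.

Lemma replacement_map_comp f g :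
  replacement_map f -> replacement_map g -> replacement_map (g \o f).
Proof.
move=> [fS fE] [gS gE]; split=> [x /fS /gS //|m w v e]; rewrite 2!map_comp.
case: (fE m w v e) => [->|[e'|e']]; first by left.
  exact: gE.
exact/Gadj_sym/gE.
Qed.

Lemma replacement_map_ext f g : f =1 g -> replacement_map f -> replacement_map g.
Proof.
move=> fg [fS fE]; split=> [x|m w v]; first by rewrite -fg; apply: fS.
by rewrite -!(eq_map fg); apply: fE.
Qed.

(* (a, b) is the edge of G_1 from which the edge (rev rw, rev rv) of G_m
   descends through gluing rules of its type. *)
Lemma redgeT_igs_map psi rw rv t : igs_map R R psi -> redgeT R rw rv = Some t ->
  exists a b, [/\ edge R a b, typ R a b = t &
   [\/ psi a = psi b /\ map psi rw = map psi rv,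
       edge R (psi a) (psi b) /\
         redgeT R (map psi rw) (map psi rv) = Some (typ R (psi a) (psi b)) |
       edge R (psi b) (psi a) /\
         redgeT R (map psi rv) (map psi rw) = Some (typ R (psi b) (psi a))]].
Proof.
case=> _ psiE psi_eq psi_fwd psi_bwd.
elim: rw rv t => [|x rw IH] [|y rv] t //=.
case: ifP => [/eqP <- | neq].
  case: ifP => // exy [<-]; exists x, y; split=> //.
  case: (psiE x y exy) => [e|/orP[e|e]]; first by constructor 1; rewrite e.
    by constructor 2; rewrite /= eqxx e.
  by constructor 3; rewrite /= eqxx e.
case E: (redgeT R rw rv) => [t'|] //; case: ifP => // g [<-].
have [a [b [eab tE base]]] := IH _ _ E; subst t'; exists a, b; split=> //.
case: base => [[eq_ab eq_w] | [e r] | [e r]].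
- by constructor 1; split; rewrite //= eq_w (psi_eq a b eab eq_ab x y g).
- constructor 2; split; rewrite //= ifF ?r ?(psi_fwd a b eab e x y g) //.
  by apply/negP => /eqP eq_w; rewrite eq_w redgeT_refl in r.
- constructor 3; split; rewrite //= ifF ?r ?(psi_bwd a b eab e x y g) //.
  by apply/negP => /eqP eq_w; rewrite eq_w redgeT_refl in r.
Qed.

Lemma igs_map_replacement psi : igs_map R R psi -> replacement_map psi.
Proof.
move=> psiR; split; first by case: psiR.
have psiS : {homo psi : x / x \in sym R} by case: psiR.
move=> m w v /and3P[wW vW]; case E: redgeT => [t|] // _.
have [a [b [_ _ [[_ eq_w] | [_ r] | [_ r]]]]] := redgeT_igs_map psiR E.
- by left; rewrite -(revK (map psi w)) -map_rev eq_w map_rev revK.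
- by right; left; rewrite /Gedge !inW_map // -!map_rev r.
- by right; right; rewrite /Gedge !inW_map // -!map_rev r.
Qed.

Lemma folding_nil m : folding R m (prefixed R [::] m) id.
Proof. by split=> // [x xW | x y e]; [exists x | right; left]. Qed.

Lemma folding_cons a wt n F phi :
  a \in sym R -> all (mem (sym R)) wt ->
  folding R (n + size wt).+1 (prefixed R [:: a] (n + size wt)) F ->
  folding R (n + size wt) (prefixed R wt n) phi ->
  folding R (n + size wt).+1 (prefixed R (a :: wt) n)
    (fun w => a :: phi (behead (F w))).
Proof.
move=> aS wtS [F_in F_adj F_fix] [phi_in phi_adj phi_fix]; split.
- move=> x /F_in[u [uW ->]]; have [u' [u'W ->]] := phi_in u uW.
  by exists u'.
- move=> x y e; have /and3P[xW yW _] := e.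
  have [u [uW Fx]] := F_in x xW; have [v [vW Fy]] := F_in y yW.
  rewrite Fx Fy /=; have := F_adj x y e; rewrite Fx Fy.
  case=> [[->]|[e'|e']]; first by left.
    by rewrite Gedge_cons // in e'; apply/Gadj_cons/phi_adj.
  by rewrite Gedge_cons // in e'; apply/Gadj_cons/Gadj_sym/phi_adj.
- move=> _ [u [uW ->]].
  have wtuW : inW R (n + size wt) (wt ++ u).
    by case/andP: uW => /eqP su uS; rewrite /inW size_cat su addnC eqxx all_cat wtS.
  rewrite /= (F_fix (a :: (wt ++ u))) /=; last by exists (wt ++ u).
  by rewrite phi_fix //; exists u.
Qed.

End ReplacementGraphs.

Section CubicalFolding.
Variables (d L s : nat) (hd : 0 < d).
Local Notation V := (cubeV d L s).

Definition cube_flip (P : pred 'I_d) (w : V) : V :=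
  ([ffun i => if P i then rev_ord (w.1 i) else w.1 i], w.2).

Lemma eta_comp_flip (js : seq 'I_d) : uniq js ->
  foldr (fun j f => eta_map j \o f) id js =1 cube_flip (fun i => i \in js).
Proof.
elim: js => [_ [f x] | j js IH /andP[jNjs js_uniq] w] /=.
  by congr pair; apply/ffunP => i; rewrite ffunE.
rewrite IH //; congr pair; apply/ffunP => i; rewrite !ffunE /= in_cons.
by case: eqVneq => [->|] //=; rewrite (negbTE jNjs).
Qed.

Definition cube_fold (a x : V) : V -> V :=
  cube_flip (fun i => odd (x.1 i) != odd (a.1 i)).

Lemma cube_fold_id a w : cube_fold a a w = w.
Proof. by case: w => f x; congr pair; apply/ffunP => i; rewrite !ffunE eqxx. Qed.

Lemma cube_fold_cglue a x y p q j :
  cedge j x y -> cglue j p q -> cube_fold a x p = cube_fold a y q.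
Proof.
move=> /andP[/forallP xy_eq /eqP xy_j] /and4P[/forallP pq_eq /eqP p_j /eqP q_j /eqP pq_sheet].
congr pair => //; apply/ffunP => i; rewrite !ffunE.
case: (eqVneq i j) => [->|ij]; last first.
  by rewrite (eqP (implyP (xy_eq i) ij)) (eqP (implyP (pq_eq i) ij)).
have L_gt0 : 0 < L by apply: leq_ltn_trans (ltn_ord (p.1 j)).
rewrite xy_j /=; case: (odd (x.1 j)); case: (odd (a.1 j));
  apply: val_inj; rewrite /= ?p_j ?q_j ?prednK ?subnn ?subn1 //.
Qed.

Variable R : IGS V 'I_d.
Hypothesis R_cubical : cubical hd R.

Lemma cubical_irrefl x : ~~ edge R x x.
Proof. by case: R_cubical => [[R_IGS _ _] _]; apply: is_IGS_irrefl. Qed.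

Lemma replacement_map_etas (js : seq 'I_d) :
  replacement_map R (foldr (fun j f => eta_map j \o f) id js).
Proof.
elim: js => [|j js IH] /=; first exact: replacement_map_id.
apply: replacement_map_comp IH _; apply: igs_map_replacement; first exact: cubical_irrefl.
by case: R_cubical => _ [_ _ [eta_iso _]]; have [psi [_ _ ? _]] := eta_iso j.
Qed.

Lemma replacement_map_flip P : replacement_map R (cube_flip P).
Proof.
apply: replacement_map_ext (replacement_map_etas [seq i <- enum 'I_d | P i]) => w.
rewrite eta_comp_flip; last exact: filter_uniq (enum_uniq _).
by congr pair; apply/ffunP => i; rewrite !ffunE mem_filter mem_enum andbT.
Qed.

Lemma ctyp_cedge (x y : V) : [exists j, cedge j x y] -> cedge (ctyp hd x y) x y.
Proof. by case/existsP => j xy; rewrite /ctyp; case: pickP => [//|/(_ j)]; rewrite xy. Qed.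

Lemma cube_fold_glue a x y p q : edge R x y -> glue R (typ R x y) p q ->
  cube_fold a x p = cube_fold a y q.
Proof.
move=> xy g; case: R_cubical => [[_ [_ [_ incl_edge _ incl_fwd incl_bwd]] _] _].
case: (incl_edge x y xy) => [/= x_y | /orP[xy'|yx']].
- by move: (cubical_irrefl x); rewrite {2}x_y xy.
- exact: cube_fold_cglue (ctyp_cedge xy') (incl_fwd x y xy xy' p q g).
- exact: esym (cube_fold_cglue a (ctyp_cedge yx') (incl_bwd x y xy yx' p q g)).
Qed.

Definition head_fold (a : V) (w : seq V) : seq V :=
  if w is x :: u then a :: map (cube_fold a x) u else [::].

Lemma head_fold_folding a m : a \in sym R ->
  folding R m.+1 (prefixed R [:: a] m) (head_fold a).
Proof.
move=> aS; have irrefl := cubical_irrefl.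
have fold_map x : replacement_map R (cube_fold a x) := replacement_map_flip _.
split.
- move=> [|x u]; rewrite ?inW_cons // => /andP[xS uW].
  by exists (map (cube_fold a x) u); split; rewrite ?inW_map //; case: (fold_map x).
- move=> [|x u] [|y v] /and3P[]; rewrite ?inW_cons ?andbF // => /andP[xS uW] /andP[yS vW].
  have sz : size (rev u) = size (rev v).
    by rewrite !size_rev (eqP (andP uW).1) (eqP (andP vW).1).
  rewrite !rev_cons; case: (eqVneq x y) => [<- | xy].
    rewrite redgeT_rcons_eq // => uv; apply: Gadj_cons => //.
    by apply: (fold_map x).2; rewrite /Gedge uW vW.
  case E: redgeT => [t|] // _; left.
  have [exy -> gl] := redgeT_rcons_neq sz xy E; congr cons.
  apply: (can_inj revK); rewrite -!map_rev.
  elim: (rev u) (rev v) gl => [|p ru IH] [|q rv] //= /andP[pq glued].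
  by rewrite (cube_fold_glue a exy pq) (IH _ glued).
- by move=> _ [u [_ ->]] /=; rewrite (eq_map (cube_fold_id a)) map_id.
Qed.

End CubicalFolding.

Theorem proposition4p5 (d L s : nat) (hd : 0 < d) (hL : 3 <= L) (hs : 0 < s)
    (R : IGS (cubeV d L s) 'I_d) :
  cubical hd R ->
  forall (n : nat) (wt : seq (cubeV d L s)), inWsharp R wt ->
    exists phi : seq (cubeV d L s) -> seq (cubeV d L s),
      folding R (n + size wt) (prefixed R wt n) phi.
Proof.
move=> R_cubical n wt [_ [_ /andP[_]]].
elim: wt => [|a wt IH] /=; first by exists id; rewrite addn0; apply: folding_nil.
case/andP => aS wtS; have [phi phi_fold] := IH wtS.
exists (fun w => a :: phi (behead (head_fold a w))); rewrite addnS.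
exact: (folding_cons (cubical_irrefl R_cubical) aS wtS
          (head_fold_folding R_cubical _ aS) phi_fold).
Qed.
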